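(* Assume Assumption A. Then the family of conductance sequences $(c_N(\eta,\xi))_{N\ge1}$, $(\eta,\xi)\in\mathbb B$, where $c_N(\eta,\xi)=\mu_N(\eta)R_N(\eta,\xi)$, is ordered.
   Context: Setting: $E$ is a fixed finite set; for each $N\ge1$, $(\eta^N_t)$ is a continuous-time irreducible Markov chain on $E$ with jump rates $R_N(\eta,\xi)$ and unique invariant probability measure $\mu_N$. Ordered families: a finite family of sequences of positive reals $(a^r_N)_{N\ge1}$, $r\in\mathfrak R$, is ordered if for all $r\neq s$ the sequence $\arctan(a^r_N/a^s_N)$ converges as $N\to\infty$. Assumption A: (i) for each $\eta\neq\xi$, either $R_N(\eta,\xi)=0$ for all $N$ or $R_N(\eta,\xi)>0$ for all $N$; let $\mathbb B=\{(\eta,\xi):\eta\ne\xi,R_N(\eta,\xi)>0\}$. (ii) For every $m\ge1$ the family $\prod_{(\eta,\xi)\in\mathbb B}R_N(\eta,\xi)^{k(\eta,\xi)}$, indexed by $k:\mathbb B\to\mathbb Z_+$ with $\sum k=m$, is ordered. *)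

From Stdlib Require Import Reals Relations.
From mathcomp Require Import all_boot.
Set Implicit Arguments. Unset Strict Implicit. Unset Printing Implicit Defensive.
Local Open Scope R_scope.

Definition ordered {I : Type} (P : I -> Prop) (a : I -> nat -> R) : Prop :=
  (forall r, P r -> forall N : nat, (0 < N)%N -> 0 < a r N) /\
  (forall r s, P r -> P s -> r <> s ->
     exists l : R, Un_cv (fun N => atan (a r N / a s N)) l).

Definition edge {E : finType} (Rt : nat -> E -> E -> R) (N : nat) (x y : E) : Prop :=
  x <> y /\ 0 < Rt N x y.

Definition irreducible {E : finType} (Rt : nat -> E -> E -> R) (N : nat) : Prop :=
  forall x y : E, clos_refl_trans E (edge Rt N) x y.

Definition invariant_prob {E : finType} (Rt : nat -> E -> E -> R) (N : nat)
  (mu : E -> R) : Prop :=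
  (forall x, 0 <= mu x) /\
  \big[Rplus/0]_(x : E) mu x = 1 /\
  (forall y : E,
     \big[Rplus/0]_(x : E | x != y) (mu x * Rt N x y)
     = mu y * \big[Rplus/0]_(z : E | z != y) Rt N y z).

(* the edge set B (N-independent under Assumption A(i); read off at N = 1) *)
Definition inB {E : finType} (Rt : nat -> E -> E -> R) (p : E * E) : bool :=
  (p.1 != p.2) && (if Rlt_dec 0 (Rt 1%nat p.1 p.2) then true else false).

Definition monomial {E : finType} (Rt : nat -> E -> E -> R) (k : E * E -> nat)
  (N : nat) : R :=
  \big[Rmult/1]_(p : E * E | inB Rt p) (Rt N p.1 p.2 ^ k p).

(* By the Markov chain tree theorem, the tree sum W_N(x) (the sum, over spanning
   trees rooted at x, of the product of the rates of their edges) is an invariant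
   measure, and by irreducibility every invariant measure is a multiple of it
   (maximum principle for mu/W).  Hence mu_N(x) R_N(x,y) is, up to a positive factor
   depending only on N, the sum over trees f rooted at x of the degree-|E| monomial
   formed by the edges of f and the edge (x,y).  By Assumption A(ii) these monomials
   form an ordered family, and the ratio of two sums of members of an ordered family
   converges in the arctangent sense: divide both sums by a dominant member. *)

From HB Require Import structures.
From Stdlib Require Import Reals Relations Lra Lia Classical.
From Stdlib Require List.
From mathcomp Require Import all_boot zify.
Set Implicit Arguments. Unset Strict Implicit. Unset Printing Implicit Defensive.
Local Open Scope R_scope.

HB.instance Definition _ := Monoid.isComLaw.Build R 0 Rplus
  (fun x y z => esym (Rplus_assoc x y z)) Rplus_comm Rplus_0_l.
HB.instance Definition _ := Monoid.isComLaw.Build R 1 Rmult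
  (fun x y z => esym (Rmult_assoc x y z)) Rmult_comm Rmult_1_l.
HB.instance Definition _ := Monoid.isMulLaw.Build R 0 Rmult Rmult_0_l Rmult_0_r.
HB.instance Definition _ :=
  Monoid.isAddLaw.Build R Rmult Rplus Rmult_plus_distr_r Rmult_plus_distr_l.

(** * Ordered families of sequences *)

Definition positive_seq (u : nat -> R) : Prop := forall n, (0 < n)%N -> 0 < u n.

Definition dominated (u v : nat -> R) : Prop := exists c, Un_cv (fun n => u n / v n) c.

Lemma Un_cv_ext_pos (u v : nat -> R) l :
  (forall n, (0 < n)%N -> u n = v n) -> Un_cv u l -> Un_cv v l.
Proof.
move=> uv u_l eps eps_gt0; have [N0 HN0] := u_l eps eps_gt0.
exists N0.+1 => n n_gt; rewrite -uv; first by apply: HN0; lia.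
by apply/ltP; lia.
Qed.

Lemma Un_cv_const (c : R) : Un_cv (fun _ => c) c.
Proof. by move=> eps eps_gt0; exists 0%nat => n _; rewrite /R_dist Rminus_diag Rabs_R0. Qed.

Lemma Un_cv_lim_ge (u : nat -> R) a l :
  (forall n, (0 < n)%N -> a <= u n) -> Un_cv u l -> a <= l.
Proof.
move=> a_le u_l; case: (Rle_lt_dec a l) => // l_lt; exfalso.
have [N0 HN0] := u_l (a - l) ltac:(lra).
have /Rabs_def2 [] := HN0 N0.+1 ltac:(lia).
have := a_le N0.+1 isT; lra.
Qed.

Lemma Un_cv_lim_le (u : nat -> R) a l :
  (forall n, (0 < n)%N -> u n <= a) -> Un_cv u l -> l <= a.
Proof.
move=> le_a u_l; suff : - a <= - l by lra.
apply: Un_cv_lim_ge (CV_opp _ _ u_l) => n n_gt0; rewrite /opp_seq; have := le_a n n_gt0; lra.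
Qed.

Lemma Un_cv_Rinv (u : nat -> R) l : Un_cv u l -> l <> 0 -> Un_cv (fun n => / u n) (/ l).
Proof.
move=> u_l l_neq0; apply: continuity_seq u_l.
apply: continuity_pt_inv => //; apply: derivable_continuous_pt; exact: derivable_pt_id.
Qed.

Lemma Un_cv_atan (u : nat -> R) l : Un_cv u l -> Un_cv (fun n => atan (u n)) (atan l).
Proof.
move=> u_l; apply: continuity_seq u_l.
apply: derivable_continuous_pt; exact: derivable_pt_atan.
Qed.

Lemma Un_cv_tan_atan (u : nat -> R) l :
  Un_cv (fun n => atan (u n)) l -> - (PI / 2) < l < PI / 2 -> Un_cv u (tan l).
Proof.
move=> atan_u_l [l_gt l_lt].
have tan_cont : continuity_pt tan l.
  apply: continuity_pt_div; [exact: continuity_sin | exact: continuity_cos |].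
  by have := cos_gt_0 _ l_gt l_lt; lra.
apply: Un_cv_ext_pos (continuity_seq _ _ _ tan_cont atan_u_l) => n _.
by rewrite tan_atan.
Qed.

(* [atan (u/v)] has limit in [0, pi/2]; away from [pi/2] this gives [u/v], and away
   from [0] it gives [v/u] through [atan (1/x) = pi/2 - atan x]. *)
Lemma dominated_total_of_atan_cv (u v : nat -> R) :
  positive_seq u -> positive_seq v ->
  (exists l, Un_cv (fun n => atan (u n / v n)) l) -> dominated u v \/ dominated v u.
Proof.
move=> u_pos v_pos [l atan_l].
have l_ge0 : 0 <= l.
  apply: (Un_cv_lim_ge _ atan_l) => n n_gt0; rewrite -atan_0; left.
  by apply: atan_increasing; apply: Rdiv_lt_0_compat; [exact: u_pos | exact: v_pos].
have l_le : l <= PI / 2.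
  by apply: (Un_cv_lim_le _ atan_l) => n _; have := atan_bound (u n / v n); lra.
have := PI2_RGT_0; case: (Rlt_le_dec l (PI / 2)) => l_lt PI2_gt0.
  by left; exists (tan l); apply: Un_cv_tan_atan atan_l _; lra.
right; exists (tan (PI / 2 - l)); apply: Un_cv_tan_atan; last by lra.
apply: Un_cv_ext_pos (CV_minus _ _ _ _ (Un_cv_const (PI / 2)) atan_l) => n n_gt0 /=.
have := u_pos n n_gt0; have := v_pos n n_gt0 => vn_gt0 un_gt0.
have -> : v n / u n = / (u n / v n) by field; lra.
by rewrite atan_inv //; apply: Rdiv_lt_0_compat.
Qed.

Lemma dominated_refl (u : nat -> R) : positive_seq u -> dominated u u.
Proof.
move=> u_pos; exists 1; apply: Un_cv_ext_pos (Un_cv_const 1) => n n_gt0.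
by have := u_pos n n_gt0; move=> *; field; lra.
Qed.

Lemma dominated_trans (u v w : nat -> R) :
  positive_seq v -> positive_seq w -> dominated u v -> dominated v w -> dominated u w.
Proof.
move=> v_pos w_pos [c1 uv] [c2 vw]; exists (c1 * c2).
apply: Un_cv_ext_pos (CV_mult _ _ _ _ uv vw) => n n_gt0.
by have := v_pos n n_gt0; have := w_pos n n_gt0; move=> *; field; lra.
Qed.

Lemma Un_cv_atan_ratio (A B m : nat -> R) a b :
  positive_seq A -> positive_seq B -> positive_seq m ->
  Un_cv (fun n => A n / m n) a -> Un_cv (fun n => B n / m n) b -> 0 < b ->
  Un_cv (fun n => atan (A n / B n)) (atan (a / b)).
Proof.
move=> A_pos B_pos m_pos A_a B_b b_gt0.
apply: Un_cv_ext_pos (Un_cv_atan (CV_mult _ _ _ _ A_a (Un_cv_Rinv B_b _))); last lra.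
move=> n n_gt0.
have := A_pos n n_gt0; have := B_pos n n_gt0; have := m_pos n n_gt0.
by move=> *; congr atan; field; lra.
Qed.

Lemma atan_ratio_cvg (A B m : nat -> R) a b :
  positive_seq A -> positive_seq B -> positive_seq m ->
  Un_cv (fun n => A n / m n) a -> Un_cv (fun n => B n / m n) b -> 0 < a + b ->
  exists l, Un_cv (fun n => atan (A n / B n)) l.
Proof.
move=> A_pos B_pos m_pos A_a B_b ab_gt0.
case: (Rlt_le_dec 0 b) => [b_gt0 | b_le0].
  by exists (atan (a / b)); exact: (Un_cv_atan_ratio A_pos B_pos m_pos A_a B_b b_gt0).
exists (PI / 2 - atan (b / a)).
have a_gt0 : 0 < a by lra.
apply: Un_cv_ext_pos
  (CV_minus _ _ _ _ (Un_cv_const (PI / 2)) (Un_cv_atan_ratio B_pos A_pos m_pos B_b A_a a_gt0)).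
move=> n n_gt0 /=; have := A_pos n n_gt0; have := B_pos n n_gt0 => Bn_gt0 An_gt0.
have -> : A n / B n = / (B n / A n) by field; lra.
by rewrite atan_inv //; apply: Rdiv_lt_0_compat.
Qed.

Lemma ordered_rescale (I : Type) (P : I -> Prop) (a b : I -> nat -> R) :
  ordered P b ->
  (forall N, (0 < N)%N -> exists2 M, 0 < M & forall r, P r -> a r N = M * b r N) ->
  ordered P a.
Proof.
move=> [b_pos b_cv] a_b; split.
  move=> r Pr N N_gt0; have [M M_gt0 abN] := a_b N N_gt0.
  by rewrite abN //; apply: Rmult_lt_0_compat => //; exact: b_pos.
move=> r s Pr Ps rs; have [l b_l] := b_cv r s Pr Ps rs.
exists l; apply: Un_cv_ext_pos b_l => N N_gt0.
have [M M_gt0 abN] := a_b N N_gt0; rewrite !abN //.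
have := b_pos s Ps N N_gt0; move=> *; congr atan; field; lra.
Qed.

Lemma ordered_inhabited (I : Type) (P : I -> Prop) (a : I -> nat -> R) :
  (forall r, P r -> ordered P a) -> ordered P a.
Proof.
move=> Pa; split=> [r Pr | r s Pr]; first exact: (Pa r Pr).1.
exact: (Pa r Pr).2.
Qed.

Section OrderedSums.

Variables (I : Type) (P : I -> Prop) (a : I -> nat -> R).
Hypothesis a_ordered : ordered P a.

Lemma ordered_dominated_total r s :
  P r -> P s -> dominated (a r) (a s) \/ dominated (a s) (a r).
Proof.
move=> Pr Ps; have [a_pos a_cv] := a_ordered.
case: (classic (r = s)) => [<- | rs]; first by left; apply: dominated_refl; exact: a_pos.
by apply: dominated_total_of_atan_cv; [exact: a_pos | exact: a_pos | exact: a_cv].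
Qed.

Lemma ordered_dominant (rs : seq I) :
  rs <> [::] -> (forall r, List.In r rs -> P r) ->
  exists m, List.In m rs /\ forall r, List.In r rs -> dominated (a r) (a m).
Proof.
have a_pos := a_ordered.1; elim: rs => [|r rs IH] // _ rs_P.
have Pr : P r by apply: rs_P; left.
case: rs IH rs_P => [_ _ | r' rs] => [|IH rs_P].
  by exists r; split=> [|s [<- | []]]; [left | apply: dominated_refl; exact: a_pos].
have [|m [rs_m m_dom]] := IH _ (fun s rs_s => rs_P s (or_intror rs_s)) => //.
have Pm : P m by apply: rs_P; right.
case: (ordered_dominated_total Pr Pm) => [rm | mr].
  by exists m; split=> [|s [<- | rs_s]] //; [right | exact: m_dom].
exists r; split=> [|s [<- | rs_s]]; first by left.
  by apply: dominated_refl; exact: a_pos.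
by apply: dominated_trans mr; [exact: a_pos | exact: a_pos | exact: m_dom].
Qed.

Lemma sum_ordered_ge0 (rs : seq I) N :
  (0 < N)%N -> (forall r, List.In r rs -> P r) -> 0 <= \big[Rplus/0]_(r <- rs) a r N.
Proof.
move=> N_gt0; elim: rs => [|r rs IH] rs_P; first by rewrite big_nil; lra.
rewrite big_cons; have := a_ordered.1 r (rs_P r (or_introl erefl)) N N_gt0.
by have := IH (fun s rs_s => rs_P s (or_intror rs_s)); lra.
Qed.

Lemma sum_ordered_ge_term (rs : seq I) r N :
  (0 < N)%N -> List.In r rs -> (forall s, List.In s rs -> P s) ->
  a r N <= \big[Rplus/0]_(s <- rs) a s N.
Proof.
move=> N_gt0; elim: rs => [|r' rs IH] // rs_r rs_P; rewrite big_cons.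
have rs'_P s : List.In s rs -> P s by move=> rs_s; apply: rs_P; right.
have := sum_ordered_ge0 N_gt0 rs'_P; have := a_ordered.1 r' (rs_P r' (or_introl erefl)) N N_gt0.
by case: rs_r => [<- | rs_r]; [lra | have := IH rs_r rs'_P; lra].
Qed.

Lemma sum_ordered_gt0 (rs : seq I) N :
  (0 < N)%N -> rs <> [::] -> (forall r, List.In r rs -> P r) ->
  0 < \big[Rplus/0]_(r <- rs) a r N.
Proof.
case: rs => [|r rs] // N_gt0 _ rs_P.
have := sum_ordered_ge_term (rs := r :: rs) N_gt0 (or_introl erefl) rs_P.
by have := a_ordered.1 r (rs_P r (or_introl erefl)) N N_gt0; lra.
Qed.

Lemma dominated_sum_cvg (rs : seq I) (w : nat -> R) :
  (forall r, List.In r rs -> dominated (a r) w) ->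
  exists c, Un_cv (fun N => \big[Rplus/0]_(r <- rs) a r N / w N) c.
Proof.
elim: rs => [|r rs IH] rs_dom.
  by exists 0; apply: Un_cv_ext_pos (Un_cv_const 0) => N _; rewrite big_nil /Rdiv Rmult_0_l.
have [C rs_C] := IH (fun s rs_s => rs_dom s (or_intror rs_s)).
have [c r_c] := rs_dom r (or_introl erefl).
exists (c + C); apply: Un_cv_ext_pos (CV_plus _ _ _ _ r_c rs_C) => N _.
by rewrite big_cons Rdiv_plus_distr.
Qed.

(* Both sums, divided by a dominant term [a m] of [ra ++ rb], converge; the limits
   sum to at least 1 since [a m] is one of the summands. *)
Lemma ordered_sum_ratio_cvg (ra rb : seq I) :
  ra <> [::] -> rb <> [::] ->
  (forall r, List.In r ra -> P r) -> (forall r, List.In r rb -> P r) ->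
  exists l, Un_cv (fun N => atan (\big[Rplus/0]_(r <- ra) a r N /
                                   \big[Rplus/0]_(r <- rb) a r N)) l.
Proof.
move=> ra_nil rb_nil ra_P rb_P.
have rab_P r : List.In r (ra ++ rb) -> P r.
  by move=> rab_r; case: (List.in_app_or _ _ _ rab_r); [exact: ra_P | exact: rb_P].
have [|m [rab_m m_dom]] := ordered_dominant _ rab_P; first by case: (ra) ra_nil.
have [alpha ra_alpha] : exists c, Un_cv (fun N => \big[Rplus/0]_(r <- ra) a r N / a m N) c.
  by apply: dominated_sum_cvg => r ra_r; apply: m_dom; apply: List.in_or_app; left.
have [beta rb_beta] : exists c, Un_cv (fun N => \big[Rplus/0]_(r <- rb) a r N / a m N) c.
  by apply: dominated_sum_cvg => r rb_r; apply: m_dom; apply: List.in_or_app; right.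
have a_pos := a_ordered.1; have m_pos := a_pos m (rab_P m rab_m).
have sum_pos rs : rs <> [::] -> (forall r, List.In r rs -> P r) ->
    positive_seq (fun N => \big[Rplus/0]_(r <- rs) a r N).
  by move=> rs_nil rs_P N N_gt0; exact: sum_ordered_gt0.
apply: (atan_ratio_cvg (sum_pos _ ra_nil ra_P) (sum_pos _ rb_nil rb_P) m_pos ra_alpha rb_beta).
suff : 1 <= alpha + beta by lra.
apply: Un_cv_lim_ge (CV_plus _ _ _ _ ra_alpha rb_beta) => N N_gt0.
have := sum_ordered_ge_term N_gt0 rab_m rab_P; have := m_pos N N_gt0.
rewrite big_cat /= -Rdiv_plus_distr => mN_gt0 le_sum.
apply: (Rmult_le_reg_r (a m N)) => //; rewrite Rmult_1_l.
by rewrite /Rdiv Rmult_assoc Rinv_l; lra.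
Qed.

Lemma ordered_sums (J : Type) (Q : J -> Prop) (S : J -> seq I) :
  (forall j, Q j -> S j <> [::] /\ forall r, List.In r (S j) -> P r) ->
  ordered Q (fun j N => \big[Rplus/0]_(r <- S j) a r N).
Proof.
move=> S_ok; split=> [j Qj N N_gt0 | j k Qj Qk _].
  by have [] := S_ok j Qj; exact: sum_ordered_gt0.
have [Sj_nil Sj_P] := S_ok j Qj; have [Sk_nil Sk_P] := S_ok k Qk.
exact: ordered_sum_ratio_cvg.
Qed.

End OrderedSums.

(** * Spanning trees and the Markov chain tree theorem *)

Definition redirect (E : finType) (f : {ffun E -> E}) (a b : E) : {ffun E -> E} :=
  [ffun v => if v == a then b else f v].

Lemma redirectE (E : finType) (f : {ffun E -> E}) a b v :
  redirect f a b v = if v == a then b else f v.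
Proof. by rewrite ffunE. Qed.

Lemma redirectK (E : finType) (f : {ffun E -> E}) a b : redirect (redirect f a b) a (f a) = f.
Proof. by apply/ffunP => v; rewrite !redirectE; case: eqVneq => [->|]. Qed.

Lemma fconnect_iterP (E : finType) (f : E -> E) u x :
  fconnect f u x <-> exists k, iter k f u = x.
Proof.
split=> [ux | [k <-]]; last exact: fconnect_iter.
by exists (findex f u x); exact: iter_findex.
Qed.

Lemma fconnect_agree_off (E : finType) (f g : E -> E) y u :
  (forall v, v != y -> g v = f v) -> fconnect f u y -> fconnect g u y.
Proof.
move=> gf /fconnect_iterP [k fk]; apply/fconnect_iterP; elim: k u fk => [|k IH] u.
  by exists 0%nat.
rewrite iterSr => fk; case: (eqVneq u y) => [->|uy]; first by exists 0%nat.
by have [j gj] := IH _ fk; exists j.+1; rewrite iterSr gf.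
Qed.

Lemma iter_cycle_eq (T : Type) (g : T -> T) y a b :
  iter a.+1 g y = y -> iter b.+1 g y = y -> iter a g y = iter b g y.
Proof.
have [n] := ubnP (a + b); elim: n a b => [|n IH] a b // ab_lt ga gb.
case: (ltngtP a b) => [ab | ba | -> //].
- have [c bE] : exists c, b = (c + a.+1)%N by exists (b - a.+1)%N; lia.
  move: gb; rewrite bE iterD ga -addSn iterD ga => gc.
  by apply: (IH a c) => //; lia.
- have [c aE] : exists c, a = (c + b.+1)%N by exists (a - b.+1)%N; lia.
  move: ga; rewrite aE iterD gb -addSn iterD gb => gc.
  by apply: (IH c b) => //; lia.
Qed.

Lemma fconnect_pred_unique (E : finType) (g : E -> E) y u v :
  fconnect g y u -> fconnect g y v -> g u = y -> g v = y -> u = v.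
Proof.
move=> /fconnect_iterP [a <-] /fconnect_iterP [b <-] ga gb.
by apply: iter_cycle_eq; rewrite iterS.
Qed.

Section FunctionalGraphs.

Variables (E : finType) (B : rel E).

(* A spanning tree oriented towards its root [x] is encoded by its parent map [f],
   with [f x = x]. *)
Definition rooted_tree (x : E) (f : {ffun E -> E}) : bool :=
  [&& f x == x, [forall u, (u != x) ==> B u (f u)] & [forall u, fconnect f u x]].

(* Every vertex has a [B]-edge and reaches [y]: a spanning tree rooted at the predecessor
   of [y] on the cycle, closed by its edge into [y]. *)
Definition cycle_through (y : E) (g : {ffun E -> E}) : bool :=
  [forall u, B u (g u)] && [forall u, fconnect g u y].

Definition cycle_pred (g : {ffun E -> E}) (y : E) : E :=
  odflt y [pick u | (g u == y) && fconnect g y u].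

Lemma rooted_treeP x (f : {ffun E -> E}) :
  reflect [/\ f x = x, forall u, u != x -> B u (f u) & forall u, fconnect f u x]
          (rooted_tree x f).
Proof.
apply: (iffP and3P) => [[/eqP fx /forallP Bf /forallP f_x] | [fx Bf f_x]].
  by split=> // u ux; have := Bf u; rewrite ux.
split; first exact/eqP.
  by apply/forallP => u; apply/implyP; exact: Bf.
exact/forallP.
Qed.

Lemma cycle_throughP y (g : {ffun E -> E}) :
  reflect ((forall u, B u (g u)) /\ forall u, fconnect g u y) (cycle_through y g).
Proof.
apply: (iffP andP) => [[/forallP Bg /forallP g_y] | [Bg g_y]] //.
by split; apply/forallP.
Qed.

Lemma cycle_predE (g : {ffun E -> E}) y u : g u = y -> fconnect g y u -> cycle_pred g y = u.
Proof.
move=> gu y_u; rewrite /cycle_pred; case: pickP => [v /andP [/eqP gv y_v] | no_pred] /=.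
  exact: fconnect_pred_unique gv gu.
by have := no_pred u; rewrite gu eqxx y_u.
Qed.

Lemma tree_redirect_root y z (f : {ffun E -> E}) :
  rooted_tree y f -> B y z -> cycle_through y (redirect f y z).
Proof.
case/rooted_treeP => _ Bf f_y Byz; apply/cycle_throughP; split.
  by move=> u; rewrite redirectE; case: eqVneq => [-> | uy] //; exact: Bf.
by move=> u; apply: fconnect_agree_off (f_y u) => v vy; rewrite redirectE (negbTE vy).
Qed.

Lemma cycle_redirect_root y (g : {ffun E -> E}) :
  cycle_through y g -> rooted_tree y (redirect g y y).
Proof.
case/cycle_throughP => Bg g_y; apply/rooted_treeP; split.
- by rewrite redirectE eqxx.
- by move=> u uy; rewrite redirectE (negbTE uy).
- by move=> u; apply: fconnect_agree_off (g_y u) => v vy; rewrite redirectE (negbTE vy).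
Qed.

Lemma tree_redirect x y (f : {ffun E -> E}) :
  rooted_tree x f -> B x y -> cycle_through y (redirect f x y).
Proof.
case/rooted_treeP => _ Bf f_x Bxy; apply/cycle_throughP; split.
  by move=> u; rewrite redirectE; case: eqVneq => [-> | ux] //; exact: Bf.
move=> u; have gx : redirect f x y x = y by rewrite redirectE eqxx.
apply: connect_trans (fconnect_agree_off _ (f_x u)) _; last by rewrite -{2}gx fconnect1.
by move=> v vx; rewrite redirectE (negbTE vx).
Qed.

Lemma cycle_pred_redirect x y (f : {ffun E -> E}) :
  rooted_tree x f -> B x y -> cycle_pred (redirect f x y) y = x.
Proof.
case/rooted_treeP => _ _ f_x Bxy; apply: cycle_predE; first by rewrite redirectE eqxx.
by apply: fconnect_agree_off (f_x y) => v vx; rewrite redirectE (negbTE vx).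
Qed.

(* The predecessor of [y] is the last point of the path from [g y] back to [y]. *)
Lemma cycle_pred_tree y (g : {ffun E -> E}) :
  cycle_through y g ->
  let x := cycle_pred g y in g x = y /\ rooted_tree x (redirect g x x).
Proof.
case/cycle_throughP => Bg g_y.
have /fconnect_iterP [k gk] := g_y (g y).
have gx : g (iter k g y) = y by rewrite -iterS iterSr.
have y_x : fconnect g y (iter k g y) by exact: fconnect_iter.
rewrite (cycle_predE gx y_x); split=> //; apply/rooted_treeP; split.
- by rewrite redirectE eqxx.
- by move=> u ux; rewrite redirectE (negbTE ux).
- move=> u; apply: fconnect_agree_off (connect_trans (g_y u) y_x) => v vx.
  by rewrite redirectE (negbTE vx).
Qed.

End FunctionalGraphs.

Section TreeExistence.

Variables (E : finType) (B : rel E) (x : E).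
Hypothesis B_connected : forall u, clos_refl_trans E (fun a b => B a b) u x.

Fixpoint walk_to (y : E) (k : nat) (u : E) : bool :=
  if k is k'.+1 then [exists v, B u v && walk_to y k' v] else u == y.

Lemma walk_to_exists u : exists k, walk_to x k u.
Proof.
elim: (clos_rt_rt1n _ _ _ _ (B_connected u)) => [y | a b c Bab _ [k bk]].
  by exists 0%nat => /=.
by exists k.+1; apply/existsP; exists b; rewrite Bab.
Qed.

(* Following, from each [u], an edge that decreases the length of a shortest walk to [x]. *)
Lemma rooted_tree_exists : exists f, rooted_tree B x f.
Proof.
pose d u := ex_minn (walk_to_exists u).
have d_walk u : walk_to x (d u) u by rewrite /d; case: ex_minnP.
have d_min u k : walk_to x k u -> (d u <= k)%N by rewrite /d; case: ex_minnP => m _; apply.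
pose f := [ffun u => if u == x then x else odflt u [pick v | B u v && walk_to x (d u).-1 v]].
have f_step u : u != x -> B u (f u) && (d (f u) < d u)%N.
  move=> ux; rewrite /f ffunE (negbTE ux).
  have du_gt0 : (0 < d u)%N by move: (d_walk u); case: (d u) => //=; rewrite (negbTE ux).
  case: pickP => [v /andP [Buv v_walk] | no_succ] /=.
    by rewrite Buv; have := d_min _ _ v_walk; lia.
  move: (d_walk u); rewrite -(prednK du_gt0) /= => /existsP [v /andP [Buv v_walk]].
  by have := no_succ v; rewrite Buv v_walk.
have f_reach n u : (d u <= n)%N -> fconnect f u x.
  elim: n u => [|n IH] u du_le.
    have du0 : d u = 0%nat by lia.
    by move: (d_walk u); rewrite du0 => /eqP ->.
  case: (eqVneq u x) => [-> // | ux].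
  have /andP [_ dfu] := f_step u ux.
  by apply: connect_trans (fconnect1 f u) (IH _ _); lia.
exists f; apply/rooted_treeP; split.
- by rewrite /f ffunE eqxx.
- by move=> u ux; case/andP: (f_step u ux).
- by move=> u; exact: (f_reach (d u)).
Qed.

End TreeExistence.

Definition balance (E : finType) (Q : E -> E -> R) (m : E -> R) : Prop :=
  forall y, \big[Rplus/0]_(x | x != y) (m x * Q x y) = m y * \big[Rplus/0]_(z | z != y) Q y z.

Lemma big_Rplus_restrict (I : finType) (A C : pred I) (F : I -> R) :
  (forall i, C i -> A i) -> (forall i, A i -> ~~ C i -> F i = 0) ->
  \big[Rplus/0]_(i | A i) F i = \big[Rplus/0]_(i | C i) F i.
Proof.
move=> CA F0; rewrite big_mkcond [RHS]big_mkcond; apply: eq_bigr => i _.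
case Ci: (C i); first by rewrite (CA i Ci).
by case Ai: (A i) => //; rewrite F0 ?Ci.
Qed.

Section TreeWeights.

Variables (E : finType) (B : rel E) (Q : E -> E -> R).

Definition tree_weight (x : E) (f : {ffun E -> E}) : R := \big[Rmult/1]_(u | u != x) Q u (f u).

Definition tree_sum (x : E) : R := \big[Rplus/0]_(f | rooted_tree B x f) tree_weight x f.

Definition cycle_sum (y : E) : R :=
  \big[Rplus/0]_(g | cycle_through B y g) \big[Rmult/1]_(u : E) Q u (g u).

Lemma prod_redirect x y (f : {ffun E -> E}) :
  \big[Rmult/1]_(u : E) Q u (redirect f x y u) = tree_weight x f * Q x y.
Proof.
rewrite (bigD1 x) //= redirectE eqxx Rmult_comm; congr Rmult.
by apply: eq_bigr => u ux; rewrite redirectE (negbTE ux).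
Qed.

(* Redirecting the root [y] of a tree along an edge [y -> z] is a bijection onto the
   cycle graphs through [y]. *)
Lemma tree_sum_out_edges y :
  tree_sum y * \big[Rplus/0]_(z | B y z) Q y z = cycle_sum y.
Proof.
rewrite /cycle_sum (reindex_onto (fun p : {ffun E -> E} * E => redirect p.1 y p.2)
                                 (fun g => (redirect g y y, g y))) /=; last first.
  by move=> g _; rewrite redirectK.
rewrite /tree_sum big_distrl /=.
under eq_bigr do rewrite big_distrr /=.
rewrite pair_big_dep; apply: eq_big => [[f z] | [f z] _] /=; last by rewrite prod_redirect.
apply/andP/andP => [[tree_f Byz] | [cyc /eqP [fE zE]]].
  have fy : f y = y by case/rooted_treeP: tree_f.
  split; first exact: tree_redirect_root.
  by rewrite redirectE eqxx -{3}fy redirectK.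
split; first by rewrite -fE; exact: cycle_redirect_root.
by case/cycle_throughP: cyc => Bg _; have := Bg y; rewrite redirectE eqxx.
Qed.

(* Adding an edge [x -> y] at the root of a tree rooted at [x] is a bijection onto
   the cycle graphs through [y]; [x] is recovered as the predecessor of [y]. *)
Lemma tree_sum_in_edges y :
  \big[Rplus/0]_(x | B x y) (tree_sum x * Q x y) = cycle_sum y.
Proof.
rewrite /cycle_sum (reindex_onto (fun p : E * {ffun E -> E} => redirect p.2 p.1 y)
                (fun g => (cycle_pred g y, redirect g (cycle_pred g y) (cycle_pred g y)))) /=;
  last first.
  move=> g cyc; have [gx _] := cycle_pred_tree cyc.
  by rewrite -[in X in redirect _ _ X]gx redirectK.
under eq_bigr do rewrite /tree_sum big_distrl /=.
rewrite pair_big_dep; apply: eq_big => [[x f] | [x f] _] /=; last by rewrite prod_redirect.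
apply/andP/andP => [[Bxy tree_f] | [cyc /eqP [xE fE]]].
  have fx : f x = x by case/rooted_treeP: tree_f.
  split; first exact: tree_redirect.
  by rewrite (cycle_pred_redirect tree_f Bxy) -[in X in redirect _ _ X]fx redirectK.
have [gx tree_g] := cycle_pred_tree cyc; rewrite fE xE in tree_g; rewrite xE in gx.
split=> //; case/cycle_throughP: cyc => Bg _.
by have := Bg x; rewrite gx.
Qed.

Hypothesis B_irrefl : irreflexive B.
Hypothesis Q_off_B : forall x y, x != y -> ~~ B x y -> Q x y = 0.

Theorem tree_sum_balance : balance Q tree_sum.
Proof.
move=> y; rewrite (@big_Rplus_restrict _ (fun x => x != y) (fun x => B x y)); last first.
- by move=> x xy Bxy; rewrite Q_off_B ?Rmult_0_r.
- by move=> x Bxy; apply: contraTneq Bxy => ->; rewrite B_irrefl.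
rewrite (@big_Rplus_restrict _ (fun z => z != y) (B y)); last first.
- by move=> z; rewrite eq_sym => yz Byz; exact: Q_off_B.
- by move=> z Byz; apply: contraTneq Byz => ->; rewrite B_irrefl.
by rewrite tree_sum_in_edges tree_sum_out_edges.
Qed.

End TreeWeights.

Section TreeSumPositive.

Variables (E : finType) (B : rel E) (Q : E -> E -> R).
Hypothesis Q_pos : forall a b, B a b -> 0 < Q a b.

Lemma tree_weight_pos x f : rooted_tree B x f -> 0 < tree_weight Q x f.
Proof.
case/rooted_treeP => _ Bf _; apply: (big_ind (fun r => 0 < r)) => //.
- lra.
- exact: Rmult_lt_0_compat.
- by move=> u ux; apply: Q_pos; exact: Bf.
Qed.

Lemma tree_sum_pos x : (exists f, rooted_tree B x f) -> 0 < tree_sum B Q x.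
Proof.
case=> f0 tree_f0; rewrite /tree_sum (bigD1 f0) //=.
apply: Rplus_lt_le_0_compat; first exact: tree_weight_pos.
apply: (big_ind (fun r => 0 <= r)); [lra | move=> a b; lra |].
by move=> f /andP [tree_f _]; left; exact: tree_weight_pos.
Qed.

End TreeSumPositive.

(** * Uniqueness of invariant measures *)

Lemma big_Rminus (I : finType) (P : pred I) (F G : I -> R) :
  \big[Rplus/0]_(i | P i) (F i - G i)
  = \big[Rplus/0]_(i | P i) F i - \big[Rplus/0]_(i | P i) G i.
Proof. by apply: (big_rec3 (fun x y z => x = y - z)) => [|i x y z _ ->]; lra. Qed.

Lemma psum_eq0_term (I : finType) (P : pred I) (F : I -> R) j :
  P j -> (forall i, P i -> 0 <= F i) -> \big[Rplus/0]_(i | P i) F i = 0 -> F j = 0.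
Proof.
move=> Pj F_ge0; rewrite (bigD1 j) //=.
have : 0 <= \big[Rplus/0]_(i | P i && (i != j)) F i.
  apply: (big_ind (fun r => 0 <= r)); [lra | move=> a b; lra |].
  by move=> i /andP [Pi _]; exact: F_ge0.
by have := F_ge0 j Pj; lra.
Qed.

Lemma exists_argmax (E : finType) (h : E -> R) (x1 : E) : exists x0, forall x, h x <= h x0.
Proof.
suff [x0 x0_max] : exists x0, forall x, x \in enum E -> h x <= h x0.
  by exists x0 => x; apply: x0_max; rewrite mem_enum.
elim: (enum E) => [|a s [x0 x0_max]]; first by exists x1.
case: (Rle_lt_dec (h a) (h x0)) => ha.
  by exists x0 => x; rewrite in_cons => /orP [/eqP -> | /x0_max].
exists a => x; rewrite in_cons => /orP [/eqP -> | /x0_max]; lra.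
Qed.

Section InvariantMeasureUnique.

Variables (E : finType) (Q : E -> E -> R) (m W : E -> R).
Hypothesis Q_ge0 : forall a b, a <> b -> 0 <= Q a b.
Hypothesis Q_irreducible : forall a b, clos_refl_trans E (fun a b => a <> b /\ 0 < Q a b) a b.
Hypothesis W_pos : forall x, 0 < W x.
Hypotheses (m_balance : balance Q m) (W_balance : balance Q W).

(* Maximum principle: subtracting the balance equations at [v] gives a vanishing sum
   of nonnegative terms [(h v - h x) W x Q x v], with [h := m / W]. *)
Lemma balance_ratio_max_spread v u :
  (forall x, m x / W x <= m v / W v) -> u <> v -> 0 < Q u v -> m u / W u = m v / W v.
Proof.
move=> v_max uv Quv; set M := m v / W v.
have sum0 : \big[Rplus/0]_(x | x != v) ((M - m x / W x) * (W x * Q x v)) = 0.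
  rewrite (eq_bigr (fun x => M * (W x * Q x v) - m x * Q x v)); last first.
    by move=> x _; have := W_pos x; move=> *; field; lra.
  rewrite big_Rminus -big_distrr /= W_balance m_balance /M.
  by have := W_pos v; move=> *; field; lra.
have term0 : (M - m u / W u) * (W u * Q u v) = 0.
  apply: (psum_eq0_term (P := fun x => x != v) (introN eqP uv) _ sum0) => x /eqP xv.
  apply: Rmult_le_pos; first by have := v_max x; rewrite -/M; lra.
  by apply: Rmult_le_pos; [left; exact: W_pos | exact: Q_ge0].
case: (Rmult_integral _ _ term0) => [| WQ0]; first lra.
by have := Rmult_lt_0_compat _ _ (W_pos u) Quv; lra.
Qed.

Theorem balance_proportional : exists M, forall x, m x = M * W x.
Proof.
case: (pickP (fun _ : E => true)) => [x1 _ | E0]; last by exists 0 => x; have := E0 x.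
have [x0 x0_max] := exists_argmax (fun x => m x / W x) x1.
exists (m x0 / W x0) => x.
suff -> : m x0 / W x0 = m x / W x by have := W_pos x; move=> *; field; lra.
move: x0_max; elim: (clos_rt_rt1n _ _ _ _ (Q_irreducible x x0)) => //.
move=> a b c [ab Qab] _ IH c_max.
have b_max y : m y / W y <= m b / W b by rewrite -(IH c_max); exact: c_max.
by rewrite (IH c_max) (balance_ratio_max_spread b_max ab Qab).
Qed.

End InvariantMeasureUnique.

(** * Conductances as sums of monomials *)

Lemma In_map_mem (T : eqType) (U : Type) (F : T -> U) (s : seq T) y :
  List.In y [seq F x | x <- s] -> exists2 x, x \in s & y = F x.
Proof.
elim: s => [|x s IH] //= [<- | /IH [x' s_x' ->]]; first by exists x; rewrite ?inE ?eqxx.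
by exists x' => //; rewrite inE s_x' orbT.
Qed.

Section TreeMonomials.

Variables (E : finType) (Rt : nat -> E -> E -> R).

Definition rate_graph : rel E := fun x y => inB Rt (x, y).

Lemma rate_graph_irrefl : irreflexive rate_graph.
Proof. by move=> x; rewrite /rate_graph /inB eqxx. Qed.

Definition tree_edge (r : E) (f : {ffun E -> E}) (e : E * E) : bool :=
  (e.1 != r) && (f e.1 == e.2).

Definition tree_exponent (r : E) (f : {ffun E -> E}) (p : E * E) (e : E * E) : nat :=
  (tree_edge r f e + (e == p))%N.

Lemma big_tree_edge (T : Type) (idx : T) (op : Monoid.com_law idx) r f (F : E * E -> T) :
  rooted_tree rate_graph r f ->
  \big[op/idx]_(e | inB Rt e && tree_edge r f e) F e = \big[op/idx]_(u | u != r) F (u, f u).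
Proof.
case/rooted_treeP => _ Bf _.
rewrite (reindex_onto (fun u : E => (u, f u)) (fun e => e.1)) /=; last first.
  by move=> [a b] /andP [_ /andP [_ /eqP ->]].
apply: eq_bigl => u; rewrite /tree_edge /= !eqxx !andbT.
by case: (eqVneq u r) => [-> | ur]; rewrite ?andbF // andbT; exact: Bf.
Qed.

Lemma tree_edge_inB r f e : rooted_tree rate_graph r f -> tree_edge r f e -> inB Rt e.
Proof.
case/rooted_treeP => _ Bf _; case: e => u v /andP [/= ur /eqP <-]; exact: Bf.
Qed.

Lemma tree_exponent_degree r f p :
  rooted_tree rate_graph r f -> inB Rt p ->
  (forall e, ~~ inB Rt e -> tree_exponent r f p e = 0%nat) /\
  (\sum_(e | inB Rt e) tree_exponent r f p e)%N = #|E|.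
Proof.
move=> tree_f Bp; split.
  move=> e Be; rewrite /tree_exponent.
  have -> : tree_edge r f e = false by apply: contraNF Be; exact: tree_edge_inB.
  by have -> : (e == p) = false by apply: contraNF Be => /eqP ->.
have E_gt0 : (0 < #|E|)%N by apply/card_gt0P; exists r.
rewrite big_split /=.
have -> : (\sum_(e | inB Rt e) (e == p))%N = 1%N.
  by rewrite (bigD1 p) //= eqxx big1 // => e /andP [_ /negbTE ->].
rewrite (eq_bigr (fun e => if tree_edge r f e then 1 else 0)%N); last by move=> e _; case: ifP.
rewrite -big_mkcondr (big_tree_edge _ (fun=> 1%N) tree_f) sum1_card.
rewrite -[in RHS](prednK E_gt0) -(cardC1 r) addn1.
by congr S; apply: eq_card => u; rewrite !inE.
Qed.

Lemma monomial_tree_exponent N r f p :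
  rooted_tree rate_graph r f -> inB Rt p ->
  monomial Rt (tree_exponent r f p) N = tree_weight (Rt N) r f * Rt N p.1 p.2.
Proof.
move=> tree_f Bp; rewrite /monomial.
under eq_bigr do rewrite pow_add.
rewrite big_split /=; congr Rmult.
  rewrite (eq_bigr (fun e => if tree_edge r f e then Rt N e.1 e.2 else 1)); last first.
    by move=> e _; case: ifP => _ /=; rewrite ?Rmult_1_r.
  by rewrite -big_mkcondr big_tree_edge.
by rewrite (bigD1 p) //= eqxx big1 /= ?Rmult_1_r // => e /andP [_ /negbTE ->].
Qed.

Definition tree_monomials (p : E * E) : seq (E * E -> nat) :=
  [seq tree_exponent p.1 f p | f <- enum (rooted_tree rate_graph p.1)].

Lemma sum_tree_monomials N p :
  inB Rt p ->
  \big[Rplus/0]_(k <- tree_monomials p) monomial Rt k N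
  = tree_sum rate_graph (Rt N) p.1 * Rt N p.1 p.2.
Proof.
move=> Bp; rewrite big_map big_enum /= /tree_sum big_distrl /=.
by apply: eq_bigr => f tree_f; exact: monomial_tree_exponent.
Qed.

Lemma tree_monomials_nonempty p :
  (exists f, rooted_tree rate_graph p.1 f) -> tree_monomials p <> [::].
Proof.
case=> f tree_f; have : f \in enum (rooted_tree rate_graph p.1) by rewrite mem_enum.
by rewrite /tree_monomials; case: (enum (rooted_tree rate_graph p.1)).
Qed.

Lemma tree_monomials_degree p k :
  inB Rt p -> List.In k (tree_monomials p) ->
  (forall e, ~~ inB Rt e -> k e = 0%nat) /\ (\sum_(e | inB Rt e) k e)%N = #|E|.
Proof.
move=> Bp k_in; have [f] := In_map_mem k_in; rewrite mem_enum => tree_f ->.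
exact: tree_exponent_degree.
Qed.

End TreeMonomials.

Lemma inB_edge1 (E : finType) (Rt : nat -> E -> E -> R) x y :
  inB Rt (x, y) <-> edge Rt 1 x y.
Proof.
rewrite /inB /edge /=; case: (Rlt_dec 0 (Rt 1%nat x y)) => R1; rewrite ?andbT ?andbF.
  by split=> [/eqP | xy]; [| apply/eqP; case: xy].
by split=> // [[]].
Qed.

Lemma clos_rt_mono (A : Type) (R S : relation A) :
  inclusion A R S -> inclusion A (clos_refl_trans A R) (clos_refl_trans A S).
Proof.
move=> RS x y; elim=> [a b /RS | a | a b c _ ab _ bc]; first exact: rt_step.
  exact: rt_refl.
exact: rt_trans ab bc.
Qed.

Section RatesDichotomy.

Variables (E : finType) (Rt : nat -> E -> E -> R).
Hypothesis rates_dichotomy : forall x y : E, x <> y ->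
  (forall N, (0 < N)%N -> Rt N x y = 0) \/ (forall N, (0 < N)%N -> 0 < Rt N x y).

Lemma inB_rate_pos N x y : (0 < N)%N -> inB Rt (x, y) -> 0 < Rt N x y.
Proof.
move=> N_gt0 /inB_edge1 [xy R1_gt0].
case: (rates_dichotomy xy) => [R0 | Rpos]; last exact: Rpos.
by have := R0 1%nat isT; lra.
Qed.

Lemma notinB_rate0 N x y : (0 < N)%N -> x != y -> ~~ inB Rt (x, y) -> Rt N x y = 0.
Proof.
move=> N_gt0 /eqP xy notB; case: (rates_dichotomy xy) => [R0 | Rpos]; first exact: R0.
by case/negP: notB; apply/inB_edge1; split=> //; exact: Rpos.
Qed.

End RatesDichotomy.

Lemma invariant_prob_tree_sum (E : finType) (Rt : nat -> E -> E -> R) N (m : E -> R) :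
  (forall x y, x <> y -> 0 <= Rt N x y) -> irreducible Rt N ->
  (forall x y, x != y -> ~~ inB Rt (x, y) -> Rt N x y = 0) ->
  (forall x y, inB Rt (x, y) -> 0 < Rt N x y) ->
  (forall x, exists f, rooted_tree (rate_graph Rt) x f) ->
  invariant_prob Rt N m ->
  exists2 M, 0 < M & forall x, m x = M * tree_sum (rate_graph Rt) (Rt N) x.
Proof.
move=> R_ge0 R_irr R0 R_pos trees [_ [m_sum1 m_bal]].
pose W := tree_sum (rate_graph Rt) (Rt N).
have W_pos x : 0 < W x by apply: tree_sum_pos; [exact: R_pos | exact: trees].
have W_bal : balance (Rt N) W by apply: tree_sum_balance; [exact: rate_graph_irrefl | exact: R0].
have [M mE] := balance_proportional R_ge0 R_irr W_pos m_bal W_bal.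
exists M => //.
have sumW_ge0 : 0 <= \big[Rplus/0]_(x : E) W x.
  by apply: (big_ind (fun r => 0 <= r)) => [|a b|x _]; [lra | lra | left; exact: W_pos].
have : M * \big[Rplus/0]_(x : E) W x = 1.
  by rewrite big_distrr /= -m_sum1; apply: eq_bigr => x _; rewrite mE.
nra.
Qed.

Theorem lemma3p4 (E : finType) (Rt : nat -> E -> E -> R) (mu : nat -> E -> R)
  (Hnonneg : forall N : nat, (0 < N)%N -> forall x y : E, x <> y -> 0 <= Rt N x y)
  (Hirr : forall N : nat, (0 < N)%N -> irreducible Rt N)
  (Hmu : forall N : nat, (0 < N)%N -> invariant_prob Rt N (mu N))
  (HA1 : forall x y : E, x <> y ->
     (forall N : nat, (0 < N)%N -> Rt N x y = 0) \/
     (forall N : nat, (0 < N)%N -> 0 < Rt N x y))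
  (HA2 : forall m : nat, (0 < m)%N ->
     ordered (fun k : E * E -> nat =>
                (forall p, ~~ inB Rt p -> k p = 0%nat) /\
                (\sum_(p : E * E | inB Rt p) k p)%N = m)
             (fun k N => monomial Rt k N)) :
  ordered (fun p : E * E => inB Rt p) (fun p N => mu N p.1 * Rt N p.1 p.2).
Proof.
have trees x : exists f, rooted_tree (rate_graph Rt) x f.
  apply: rooted_tree_exists => u; apply: clos_rt_mono (Hirr 1%nat isT u x) => a b.
  by move/inB_edge1.
apply: (@ordered_rescale _ _ _
          (fun p N => \big[Rplus/0]_(k <- tree_monomials Rt p) monomial Rt k N)).
  apply: ordered_inhabited => p0 _.
  have E_gt0 : (0 < #|E|)%N by apply/card_gt0P; exists p0.1.
  apply: (ordered_sums (HA2 _ E_gt0)) => p Bp; split; first exact: tree_monomials_nonempty.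
  by move=> k; exact: tree_monomials_degree.
move=> N N_gt0.
have [M M_gt0 muE] := invariant_prob_tree_sum (Hnonneg N N_gt0) (Hirr N N_gt0)
  (fun x y => notinB_rate0 HA1 N_gt0) (fun x y => inB_rate_pos HA1 N_gt0) trees (Hmu N N_gt0).
by exists M => // p Bp; rewrite muE sum_tree_monomials // Rmult_assoc.
Qed.
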